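(* Let $M\in[\mathbb N]$, $n\in\mathbb N$ and $\xi<\omega_1$. Suppose that $S_\xi^n(M)=\bigcup_{i=1}^k\mathfrak F_i$, where each $\mathfrak F_i$ is a hereditary family of finite subsets of $\mathbb N$. Then there exist $N\in[M]$ and $i_0\le k$ such that $S_\xi^n(N)\subset\mathfrak F_{i_0}$.
   Context: $[M]$ is the set of infinite subsets of $M$, enumerated increasingly $N=(n_i)$; $N(F)=\{n_i:i\in F\}$, $\mathfrak G(N)=\{N(F):F\in\mathfrak G\}$. A family is hereditary if closed under taking subsets. For finite nonempty $F_1$ and nonempty $F_2$, $F_1<F_2$ means $\max F_1<\min F_2$. For hereditary $\mathfrak G$, $\mathfrak G^n=\{\bigcup_{i=1}^nF_i:F_1<\cdots<F_n,\ F_i\in\mathfrak G\}$; $S_\xi^n(N)$ means $(S_\xi^n)(N)$. For each countable ordinal $\xi$ fix successor ordinals $(\beta_j(\xi)+1)_j$: equal to $\xi$ if $\xi$ is a successor, strictly increasing to $\xi$ if $\xi$ is a limit. Schreier families: $S_0=\{\{j\}:j\in\mathbb N\}\cup\{\emptyset\}$; $S_{\zeta+1}=\{\bigcup_{i=1}^jF_i:j\le\min F_1,\ F_1<\cdots<F_j,\ F_i\in S_\zeta\}\cup\{\emptyset\}$; for limit $\xi$, $S_\xi=\{F:F\in S_{\beta_j(\xi)+1}\text{ for some }j\le\min F\}$. *)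

From mathcomp Require Import all_boot.
From mathcomp Require Import boolp classical_sets cardinality.
Set Implicit Arguments. Unset Strict Implicit. Unset Printing Implicit Defensive.
Local Open Scope classical_set_scope.

(* Countable ordinals with fixed fundamental sequences, as Brouwer trees:
   OL f stands for the limit ordinal sup_j f j, where f j = beta_j(xi)+1
   (0-indexed: f j is the paper's beta_{j+1}(xi)+1). *)
Inductive ord := OZ | OS of ord | OL of (nat -> ord).

Fixpoint ole (a b : ord) {struct a} : Prop :=
  match a with
  | OZ => True
  | OS a' =>
      (fix olt_a' (b : ord) : Prop :=
         match b with
         | OZ => False
         | OS b' => ole a' b'
         | OL g => exists n, olt_a' (g n)
         end) b
  | OL f => forall n, ole (f n) b
  end.

Definition olt (a b : ord) : Prop := ole (OS a) b.

Definition is_succ (a : ord) : Prop := exists b, a = OS b.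

Fixpoint ord_wf (a : ord) : Prop :=
  match a with
  | OZ => True
  | OS b => ord_wf b
  | OL f => (forall j, is_succ (f j) /\ ord_wf (f j)) /\
            (forall j, olt (f j) (f j.+1))
  end.

Definition blocks (G : set (set nat)) (j : nat) (F : set nat) : Prop :=
  exists Fs : nat -> set nat,
    (forall i, i < j -> G (Fs i) /\ Fs i !=set0) /\
    (forall i, i.+1 < j -> forall x y, Fs i x -> Fs i.+1 y -> x < y) /\
    F = \bigcup_(i in [set i | i < j]) Fs i.

(* Schreier families; the natural numbers are {1,2,...}. *)
Fixpoint schreier (a : ord) : set (set nat) :=
  match a with
  | OZ => [set F | F = set0 \/ exists j, 1 <= j /\ F = [set j]]
  | OS b => [set F | F = set0 \/
               exists j, 1 <= j /\ (forall x, F x -> j <= x) /\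
                         blocks (schreier b) j F]
  | OL f => [set F | exists j, (forall x, F x -> j < x) /\ schreier (f j) F]
  end.

(* G^n: unions of (at most) n successive members of G; empty members
   are allowed (G hereditary contains the empty set), i.e. the nonempty
   ones are successive. *)
Definition fpow (G : set (set nat)) (n : nat) : set (set nat) :=
  [set F | exists j, j <= n /\ blocks G j F].

(* An infinite subset of N = {1,2,...} given by its increasing enumeration
   n_1 < n_2 < ...  (0-indexed: M 0 = n_1). *)
Definition inf_subset (M : nat -> nat) : Prop :=
  0 < M 0 /\ forall i, M i < M i.+1.

Definition subinf (N M : nat -> nat) : Prop :=
  inf_subset N /\ forall i, exists k, N i = M k.

(* G(N) = { N(F) : F in G }, N(F) = { n_i : i in F } with n_i = N (i-1). *)
Definition fam_img (N : nat -> nat) (G : set (set nat)) : set (set nat) :=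
  [set (fun i => N i.-1) @` F | F in G].

Definition hereditary (G : set (set nat)) : Prop :=
  forall A B, G A -> B `<=` A -> G B.

(* Every family S_xi^n is well founded (along any increasing sequence
   a_1 < a_2 < ... some iterated derived family
   {F > a_m : {a_1, ..., a_m} u F in S_xi^n} is empty) and spreading.
   For a well-founded family G, a colouring of its members supported in an
   infinite set L by finitely many hereditary families is constant on the
   members supported in some infinite L' <= L: by induction on the
   well-founded tree, each derived family G_a admits such a set; a diagonal
   argument then picks a_1 < a_2 < ... together with nested infinite sets
   monochromatic for the G_{a_j}, and the infinite pigeonhole principle keeps
   the a_j of a single colour.  Spreading turns the members of S_xi^n(N),
   for N the subsequence of M indexed by L', into images under M of members
   of S_xi^n supported in L'. *)

From mathcomp Require Import all_boot.
From mathcomp Require Import boolp classical_sets cardinality.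
From mathcomp Require Import zify.
Set Implicit Arguments. Unset Strict Implicit. Unset Printing Implicit Defensive.
Local Open Scope classical_set_scope.

Definition unbounded (L : set nat) : Prop := forall m, exists2 x, m < x & L x.

Lemma unboundedU A B : unbounded (A `|` B) -> unbounded A \/ unbounded B.
Proof.
move=> uAB; have [uA|/existsNP[m mA]] := pselect (unbounded A); [by left|right].
move=> p; have [x + [Ax|Bx]] := uAB (maxn m p); rewrite gtn_max => /andP[mx px].
  by case: mA; exists x.
by exists x.
Qed.

Lemma unbounded_pigeonhole k (c : nat -> nat) :
  unbounded [set j | c j < k] -> exists2 i, i < k & unbounded [set j | c j = i].
Proof.
elim: k => [/(_ 0)[]//|k IH] uk.
have : unbounded ([set j | c j < k] `|` [set j | c j = k]).
  move=> m; have [x mx] := uk m; rewrite /= ltnS leq_eqVlt => /orP[/eqP|] cx.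
    by exists x => //; right.
  by exists x => //; left.
case/unboundedU => [/IH[i ik ui]|ui]; first by exists i => //; exact: ltnW.
by exists k.
Qed.

Lemma homo_ltn_infl (h : nat -> nat) : {homo h : x y / x < y} -> forall x, x <= h x.
Proof.
by move=> h_incr; elim=> // x IH; exact: leq_ltn_trans IH (h_incr _ _ (ltnSn x)).
Qed.

Lemma unbounded_enum L :
  unbounded L -> exists2 e : nat -> nat, {homo e : x y / x < y} & forall t, L (e t).
Proof.
move=> uL; have [g gP] : {g : nat -> nat & forall m, m < g m /\ L (g m)}.
  apply: (@choice _ _ (fun m x => m < x /\ L x)) => m.
  by have [x mx Lx] := uL m; exists x.
exists (fun t => iter t.+1 g 0); last by move=> t; exact: (gP _).2.
by apply: (homo_ltn (r := fun x y => x < y) ltn_trans) => t; exact: (gP _).1.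
Qed.

Lemma setU1_neq0 T (a : T) A : a |` A <> set0.
Proof. by move=> aA0; have /[!aA0] : (a |` A) a by left. Qed.

Definition fam_deriv (G : set (set nat)) (a : nat) : set (set nat) :=
  [set F | (forall x, F x -> a < x) /\ G (a |` F)].

Inductive wf_family : set (set nat) -> Prop :=
  WfFamily G : (forall a, fam_deriv G a !=set0 -> wf_family (fam_deriv G a)) ->
               wf_family G.

Lemma fam_derivS G H a : G `<=` H -> fam_deriv G a `<=` fam_deriv H a.
Proof. by move=> GH F [Fa /GH]. Qed.

Lemma wf_family_sub G H : wf_family H -> G `<=` H -> wf_family G.
Proof.
move=> wH; elim: wH G => {}H _ IH G GH; constructor => a [F dF].
by apply: (IH a _ _ (fam_derivS GH)); exists F; exact: fam_derivS dF.
Qed.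

Lemma wf_family0 : wf_family set0.
Proof. by constructor => a [F [_ []]]. Qed.

Lemma wf_family_deriv G a : wf_family G -> wf_family (fam_deriv G a).
Proof.
case=> {}G wG; have [->|/set0P/wG//] := eqVneq (fam_deriv G a) set0.
exact: wf_family0.
Qed.

Lemma fam_derivU G H a : fam_deriv (G `|` H) a = fam_deriv G a `|` fam_deriv H a.
Proof.
apply/seteqP; split => F; first by case=> Fa [GF|HF]; [left|right].
by case=> -[Fa ?]; split=> //; [left|right].
Qed.

Lemma wf_familyU G H : wf_family G -> wf_family H -> wf_family (G `|` H).
Proof.
move=> wG; elim: wG H => {}G _ IH H wH; constructor => a _; rewrite fam_derivU.
have [->|/set0P ne] := eqVneq (fam_deriv G a) set0.
  by rewrite set0U; exact: wf_family_deriv.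
exact/(IH a ne)/wf_family_deriv.
Qed.

Definition fam_cat (G H : set (set nat)) : set (set nat) :=
  [set F | exists A B, [/\ G A, H B, (forall x y, A x -> B y -> x < y) & F = A `|` B]].

Lemma fam_catSl G G' H : G `<=` G' -> fam_cat G H `<=` fam_cat G' H.
Proof. by move=> GG' F [A [B [/GG' GA HB AB ->]]]; exists A, B. Qed.

Lemma fam_deriv_cat G H a :
  fam_deriv (fam_cat G H) a `<=` fam_cat (fam_deriv G a) H `|` fam_deriv H a.
Proof.
move=> F [Fa [A [B [GA HB AB aF]]]].
have Fna : ~ F a by move/Fa; rewrite ltnn.
have FE : F = (A `|` B) `\ a by rewrite -aF setDUl setDv set0U not_setD1.
have [Aa|nAa] := pselect (A a).
  have Bna : ~ B a by move/(AB _ _ Aa); rewrite ltnn.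
  left; exists (A `\ a), B; split => //.
  - split; last by rewrite setD1K.
    by move=> x Ax; apply: Fa; rewrite FE; split; [left|]; case: Ax.
  - by move=> x y [Ax _]; exact: AB.
  - by rewrite FE setDUl [B `\ a]not_setD1.
have A0 : A = set0.
  apply/seteqP; split => // x Ax; have : (a |` F) a by left.
  rewrite aF => -[//|/(AB _ _ Ax) xa].
  have : (a |` F) x by rewrite aF; left.
  by case=> [xa'|/Fa]; [move: xa; rewrite xa' ltnn|lia].
by right; split => //; rewrite aF A0 set0U.
Qed.

Lemma wf_family_cat G H : wf_family G -> wf_family H -> wf_family (fam_cat G H).
Proof.
move=> wG wH; elim: wG => {}G _ IH; constructor => a _.
apply: (wf_family_sub _ (@fam_deriv_cat G H a)).
apply: wf_familyU; last exact: wf_family_deriv.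
have [GaE|/set0P ne] := eqVneq (fam_deriv G a) set0; last exact: IH.
by apply: (wf_family_sub wf_family0) => F [A [B [+ _ _ _]]]; rewrite GaE.
Qed.

Fixpoint fam_pow (G : set (set nat)) (j : nat) : set (set nat) :=
  if j is j'.+1 then fam_cat (fam_pow G j') G else [set set0].

Lemma wf_family_set0 : wf_family [set set0].
Proof. by constructor => a [F [_ aF0]]; case: (setU1_neq0 aF0). Qed.

Lemma wf_family_fam_pow G j : wf_family G -> wf_family (fam_pow G j).
Proof.
by move=> wG; elim: j => [|j IH] /=; [exact: wf_family_set0|exact: wf_family_cat].
Qed.

Lemma fam_pow_mono G : G set0 -> {homo fam_pow G : i j / i <= j >-> i `<=` j}.
Proof.
move=> G0; apply: (homo_leq (r := fun A B => A `<=` B)) => [A|y x z|i F Fi].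
- exact: subset_refl.
- exact: subset_trans.
- by exists F, set0; rewrite setU0.
Qed.

Lemma blocks_ordered (Fs : nat -> set nat) j :
  (forall i, i < j -> Fs i !=set0) ->
  (forall i, i.+1 < j -> forall x y, Fs i x -> Fs i.+1 y -> x < y) ->
  forall i i' x y, i < i' < j -> Fs i x -> Fs i' y -> x < y.
Proof.
move=> ne succ i; elim=> // i' IH x y /andP[]; rewrite ltnS leq_eqVlt.
case/orP => [/eqP-> ij Fx Fy|ii' ij Fx Fy]; first exact: succ _ ij _ _ Fx Fy.
have [z Fz] := ne i' (ltnW ij).
by apply: ltn_trans (succ _ ij _ _ Fz Fy); apply: IH Fx Fz; rewrite ii' ltnW.
Qed.

Lemma blocksS G j F : blocks G j.+1 F -> fam_cat (blocks G j) G F.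
Proof.
move=> [Fs [ne [succ ->]]]; exists (\bigcup_(i < j) Fs i), (Fs j); split.
- exists Fs; split; first by move=> i ij; apply: ne; exact: ltnW.
  by split => // i ij; apply: succ; exact: ltnW.
- by have [] := ne j (ltnSn j).
- move=> x y [i /= ij Fx] Fy.
  by apply: (blocks_ordered (fun i h => (ne i h).2) succ) Fx Fy; rewrite ij /=.
- by rewrite !bigcup_mkord big_ord_recr.
Qed.

Lemma blocks_fam_pow G j : blocks G j `<=` fam_pow G j.
Proof.
elim: j => [|j IH] F; last by move/blocksS; exact: fam_catSl.
by case=> Fs [_ [_ ->]]; rewrite /= bigcup_mkord big_ord0.
Qed.

Lemma fpow_fam_pow G n : G set0 -> fpow G n `<=` fam_pow G n.
Proof. by move=> G0 F [j [jn /blocks_fam_pow]]; exact: fam_pow_mono. Qed.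

Lemma wf_family_bigcup n (Gs : nat -> set (set nat)) :
  (forall i, i < n -> wf_family (Gs i)) -> wf_family (\bigcup_(i < n) Gs i).
Proof.
move=> wGs; rewrite bigcup_mkord; apply: big_ind => [||i _].
- exact: wf_family0.
- exact: wf_familyU.
- exact: wGs.
Qed.

Lemma schreier0 b : schreier b set0.
Proof. by elim: b => [||f IH] /=; [left|left|exists 0]. Qed.

Lemma wf_family_schreier b : wf_family (schreier b).
Proof.
elim: b => [|b IH|f IH]; constructor => a _.
- apply: (wf_family_sub wf_family_set0).
  move=> F [Fa [aF0|[j [_ aFj]]]]; first by case: (setU1_neq0 aF0).
  apply/seteqP; split => // x Fx.
  have [ja jx] : [set j] a /\ [set j] x by rewrite -aFj; split; [left|right].
  by move: (Fa x Fx); rewrite ja jx ltnn.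
- (* A member of S_(b+1) with minimum a is a union of at most a members of S_b. *)
  apply: (wf_family_sub (wf_family_deriv a (wf_family_fam_pow a IH))).
  move=> F [Fa [aF0|[j [_ [jmin /blocks_fam_pow bl]]]]].
    by case: (setU1_neq0 aF0).
  by split => //; apply: (fam_pow_mono (schreier0 b) (jmin a _)) bl; left.
- (* A member of S_(OL f) with minimum a lies in some S_(f j) with j < a. *)
  apply: (wf_family_sub (wf_family_deriv a (wf_family_bigcup (fun i _ => IH i)))).
  by move=> F [Fa [j [jlt sF]]]; split => //; exists j => //; apply: jlt; left.
Qed.

Lemma wf_family_fpow b n : wf_family (fpow (schreier b) n).
Proof.
apply: (wf_family_sub (wf_family_fam_pow n (wf_family_schreier b))).
exact: fpow_fam_pow (schreier0 b).
Qed.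

Definition spreading (G : set (set nat)) : Prop :=
  forall h, {homo h : x y / x < y} -> forall F, G F -> G (h @` F).

Lemma blocks_spreading G j : spreading G -> spreading (blocks G j).
Proof.
move=> sG h h_incr F [Fs [ne [succ ->]]]; exists (fun i => h @` Fs i); split.
  by move=> i ij; have [GF [x Fx]] := ne i ij; split; [exact: sG|exists (h x), x].
split; last by rewrite image_bigcup.
by move=> i ij _ _ [x Fx <-] [y Fy <-]; apply: h_incr; exact: succ Fx Fy.
Qed.

Lemma schreier_spreading b : spreading (schreier b).
Proof.
elim: b => [|b IH|f IH] h h_incr F; have h_infl := homo_ltn_infl h_incr.
- case=> [->|[j [j1 ->]]]; first by left; rewrite image_set0.
  right; exists (h j); rewrite image_set1; split=> //.
  exact: leq_trans j1 (h_infl j).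
- case=> [->|[j [j1 [jmin bl]]]]; first by left; rewrite image_set0.
  right; exists j; split => //; split; last exact: blocks_spreading.
  by move=> _ [x Fx <-]; exact: leq_trans (jmin x Fx) (h_infl x).
- case=> j [jlt sF]; exists j; split; last exact: IH.
  by move=> _ [x Fx <-]; exact: leq_trans (jlt x Fx) (h_infl x).
Qed.

Lemma fpow_spreading G n : spreading G -> spreading (fpow G n).
Proof.
by move=> sG h h_incr F [j [jn bl]]; exists j; split => //; exact: blocks_spreading.
Qed.

Lemma schreier_gt0 b F x : schreier b F -> F x -> 0 < x.
Proof.
elim: b F => [|b IH|f IH] F /=.
- by case=> [->//|[j [j1 ->]]] ->.
- by case=> [->//|[j [j1 [jmin _]]]] /jmin; exact: leq_trans.
- by case=> j [jlt _] /jlt; exact: leq_ltn_trans.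
Qed.

Lemma fpow_schreier_gt0 b n F x : fpow (schreier b) n F -> F x -> 0 < x.
Proof. by case=> j [_ [Fs [ne [_ ->]]]] [i /= ij]; apply: schreier_gt0 (ne i ij).1. Qed.

Lemma setU1_min_nat (A : set nat) :
  A !=set0 -> exists2 y, A y & A = y |` [set x | A x /\ y < x].
Proof.
move=> [x Ax]; have exA : exists x, `[< A x >] by exists x; exact/asboolP.
case: (ex_minnP exA) => y /asboolP Ay ymin; exists y => //.
apply/seteqP; split => [z Az|z [->//|[]//]].
have := ymin z (asboolT Az); rewrite leq_eqVlt => /orP[/eqP->|yz]; [by left|by right].
Qed.

Lemma diagonal_sequence (L : set nat) (Q : nat -> set nat -> nat -> Prop) :
  unbounded L ->
  (forall Lc, unbounded Lc -> Lc `<=` L -> exists a L1 c,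
     [/\ Lc a, L1 `<=` Lc, (forall x, L1 x -> a < x), unbounded L1 & Q a L1 c]) ->
  exists a Ls c, [/\ {homo a : x y / x < y}, forall j, L (a j),
    forall j, Q (a j) (Ls j) (c j) & forall j j', j < j' -> Ls j (a j')].
Proof.
move=> uL step.
pose good Lc (t : nat * set nat * nat) := [/\ Lc t.1.1, t.1.2 `<=` Lc,
  (forall x, t.1.2 x -> t.1.1 < x), unbounded t.1.2 & Q t.1.1 t.1.2 t.2].
have [f fP] : {f : set nat -> nat * set nat * nat &
               forall Lc, unbounded Lc -> Lc `<=` L -> good Lc (f Lc)}.
  apply: (@choice _ _ (fun Lc t => unbounded Lc -> Lc `<=` L -> good Lc t)) => Lc.
  have [[uLc LcL]|nLc] := pselect (unbounded Lc /\ Lc `<=` L).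
    by have [a [L1 [c ?]]] := step Lc uLc LcL; exists (a, L1, c).
  by exists (0, set0, 0) => uLc LcL; case: nLc.
pose Lc j := iter j (fun Lc => (f Lc).1.2) L.
have LcP j : unbounded (Lc j) /\ Lc j `<=` L.
  elim: j => [|j [uLj LjL]]; first by split.
  have [_ L1j _ uL1 _] := fP _ uLj LjL.
  by split => //; exact: subset_trans L1j LjL.
have {}fP j : good (Lc j) (f (Lc j)) := fP _ (LcP j).1 (LcP j).2.
have Lc_decr : {homo Lc : i j / i <= j >-> j `<=` i}.
  apply: (homo_leq (r := fun A B => B `<=` A)) => [A|A B C AB BC|j].
  - exact: subset_refl.
  - exact: subset_trans BC AB.
  - by case: (fP j).
exists (fun j => (f (Lc j)).1.1), (fun j => Lc j.+1), (fun j => (f (Lc j)).2); split.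
- apply: (homo_ltn (r := fun x y => x < y) ltn_trans) => j.
  by case: (fP j) => _ _ + _ _; apply; case: (fP j.+1).
- by move=> j; case: (fP j) => aj _ _ _ _; exact: (LcP j).2.
- by move=> j; case: (fP j).
- by move=> j j' jj'; case: (fP j') => aj' _ _ _ _; exact: Lc_decr jj' _ aj'.
Qed.

Lemma wf_family_ramsey k G (Fs : nat -> set (set nat)) L :
  wf_family G -> 0 < k -> (forall i, i < k -> hereditary (Fs i)) -> unbounded L ->
  (forall A, G A -> A `<=` L -> exists2 i, i < k & Fs i A) ->
  exists2 L', L' `<=` L /\ unbounded L' &
    exists2 i, i < k & forall A, G A -> A `<=` L' -> Fs i A.
Proof.
move=> wG k0; elim: wG Fs L => {}G _ IH Fs L her uL cov.
pose Q a L1 c := c < k /\ forall F, fam_deriv G a F -> F `<=` L1 -> Fs c (a |` F).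
have step Lc : unbounded Lc -> Lc `<=` L -> exists a L1 c,
    [/\ Lc a, L1 `<=` Lc, (forall x, L1 x -> a < x), unbounded L1 & Q a L1 c].
  move=> uLc LcL; have [a _ Lca] := uLc 0.
  pose L1 := [set x | Lc x /\ a < x].
  have uL1 : unbounded L1.
    move=> m; have [x + Lcx] := uLc (maxn m a).
    by rewrite gtn_max => /andP[mx ax]; exists x.
  have [Ga0|/set0P ne] := eqVneq (fam_deriv G a) set0.
    exists a, L1, 0; split => //; [by move=> x []|by move=> x []|].
    by split => // F; rewrite Ga0.
  have her_a i : i < k -> hereditary [set F | Fs i (a |` F)].
    by move=> ik A B FsA BA; exact: (her _ ik _ _ FsA (setUS BA)).
  have cov_a F : fam_deriv G a F -> F `<=` L1 -> exists2 i, i < k & Fs i (a |` F).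
    by move=> [_ GaF] FL1; apply: cov GaF _ => x [->|/FL1[Lcx _]]; exact: LcL.
  have [L2 [L2L1 uL2] [c ck Fc]] := IH a ne _ _ her_a uL1 cov_a.
  by exists a, L2, c; split => // x /L2L1[].
have [a [Ls [c [a_incr aL Qa Ls_a]]]] := diagonal_sequence uL step.
have [i ik ui] : exists2 i, i < k & unbounded [set j | c j = i].
  by apply: unbounded_pigeonhole => m; exists m.+1 => //; case: (Qa m.+1).
pose L' := a @` [set j | c j = i].
have L'_mono A : G A -> A `<=` L' -> A !=set0 -> Fs i A.
  move=> GA AL' /setU1_min_nat[y Ay AE]; have [j cj yE] := AL' y Ay; subst y.
  case: (Qa j) => _; rewrite AE -cj; apply.
    by split; [move=> x [] | rewrite -AE].
  move=> x [Ax]; have [j' _ <-] := AL' x Ax.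
  by rewrite (leqW_mono (leq_mono a_incr)); exact: Ls_a.
exists L'.
  split=> [_ [j _ <-]//|m]; have [j mj cj] := ui m.
  by exists (a j); [exact: leq_trans mj (homo_ltn_infl a_incr j)|exists j].
(* If the colour [i] is empty, no nonempty member of [G] lies in [L'], and
   the empty set keeps a colour of its own. *)
have [Fi0|nFi0] := pselect (Fs i set0).
  by exists i => // A GA AL'; have [->//|/set0P] := eqVneq A set0; exact: L'_mono.
have [c0 c0k Fc0] : exists2 c0, c0 < k & (G set0 -> Fs c0 set0).
  have [G0|nG0] := pselect (G set0); last by exists 0.
  by have [c0 c0k ?] := cov set0 G0 (sub0set _); exists c0.
exists c0 => // A GA AL'; have [A0|/set0P nA] := eqVneq A set0.
  by rewrite A0 in GA *; exact: Fc0.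
by case: nFi0; apply: her _ ik _ _ (L'_mono A GA AL' nA) (sub0set _).
Qed.

Lemma fpow_set0 G n : fpow G n set0.
Proof.
exists 0; split => //; exists (fun=> set0); do 2!split => //.
by rewrite bigcup_mkord big_ord0.
Qed.

Lemma spreading_subinf G M L :
  spreading G -> (forall F x, G F -> F x -> 0 < x) -> inf_subset M ->
  unbounded L -> L `<=` [set x | 0 < x] ->
  exists2 N, subinf N M & forall A, fam_img N G A ->
    exists2 F, G F /\ F `<=` L & A = (fun i => M i.-1) @` F.
Proof.
move=> sG G_gt0 [M0 M_step] uL Lpos; have [e e_incr eL] := unbounded_enum uL.
have e_gt0 t : 0 < e t := Lpos _ (eL t).
have M_incr : {homo M : x y / x < y}.
  exact: (homo_ltn (r := fun x y => x < y) ltn_trans M_step).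
exists (fun t => M (e t).-1).
  split; [split|by move=> t; exists (e t).-1].
    exact: leq_trans M0 (ltnW_homo M_incr (leq0n _)).
  by move=> t; apply: M_incr; have := e_incr t t.+1 (ltnSn t); have := e_gt0 t; lia.
(* Indices are 1-based: [E] maps x > 0 to the x-th element of [L], so that
   N(F) = M(E(F)). *)
move=> _ [F GF <-]; pose E x := if x is x'.+1 then e x' else 0.
have E_incr : {homo E : x y / x < y} by case=> [|x] [|y] //=; rewrite ltnS => /e_incr.
have F_gt0 x : F x -> 0 < x by exact: G_gt0 GF.
exists (E @` F); first split; first exact: sG.
  by move=> _ [[/F_gt0//|x] _ <-]; exact: eL.
by rewrite image_comp; apply: eq_imagel => -[/F_gt0|].
Qed.

Theorem lemma2p14 (M : nat -> nat) (n : nat) (xi : ord)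
  (k : nat) (Fam : nat -> set (set nat)) :
  inf_subset M -> 1 <= n -> ord_wf xi ->
  (forall i, i < k -> hereditary (Fam i) /\
                      (forall A, Fam i A -> finite_set A)) ->
  fam_img M (fpow (schreier xi) n) = [set A | exists2 i, i < k & Fam i A] ->
  exists N, subinf N M /\
    exists2 i0, i0 < k & fam_img N (fpow (schreier xi) n) `<=` Fam i0.
Proof.
move=> M_inf _ _ hFam Hcov; set G := fpow (schreier xi) n.
pose imgM (F : set nat) := (fun i => M i.-1) @` F.
have cov A : G A -> A `<=` [set x | 0 < x] -> exists2 i, i < k & (imgM @^-1` Fam i) A.
  move=> GA _; have : fam_img M G (imgM A) by exists A.
  by rewrite Hcov => -[i ik FiA]; exists i.
have her i : i < k -> hereditary (imgM @^-1` Fam i).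
  by move=> ik A B FA BA; exact: (hFam i ik).1 _ _ FA (image_subset _ BA).
have k_gt0 : 0 < k.
  by have [i ik _] := cov set0 (fpow_set0 _ _) (sub0set _); exact: leq_ltn_trans ik.
have upos : unbounded [set x | 0 < x] by move=> m; exists m.+1.
have [L [Lpos uL] [i ik Fi]] :=
  wf_family_ramsey (wf_family_fpow xi n) k_gt0 her upos cov.
have [N MN NL] := spreading_subinf (fpow_spreading (@schreier_spreading xi))
                    (@fpow_schreier_gt0 xi n) M_inf uL Lpos.
by exists N; split => //; exists i => // _ /NL[F [GF FL] ->]; exact: Fi.
Qed.
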